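(* Let $X$ be a set and $GDNP(X)$ the free GDN-Poisson algebra on $X$ (with unit $e$ for $\cdot$). For any $u\in[X]$ and $a_1,\dots,a_n\in X$ with $n\ge1$, $$u\circ(a_1\cdots a_n)=\sum_{i=1}^n(u\,a_1\cdots\widehat{a_i}\cdots a_n)\circ a_i-(n-1)(u\,a_1\cdots a_n)\circ e,$$ where juxtaposition denotes the product $\cdot$ and $\widehat{a_i}$ means $a_i$ is omitted.
   Context: A GDN-Poisson algebra is a vector space with bilinear products $\cdot,\circ$ such that $(\cdot)$ is commutative associative with unit $e$, $x\circ(y\circ z)-(x\circ y)\circ z=y\circ(x\circ z)-(y\circ x)\circ z$, $(x\circ y)\circ z=(x\circ z)\circ y$, $(x\cdot y)\circ z=x\cdot(y\circ z)$, and $(x\circ y)\cdot z-x\circ(y\cdot z)=(y\circ x)\cdot z-y\circ(x\cdot z)$. $[X]$ denotes the free commutative monoid on $X$ with unit $e$, viewed inside $GDNP(X)$ as $\cdot$-products of generators. *)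

(* The free GDN-Poisson algebra GDNP(X) over a field K is
   presented as formal terms modulo the smallest congruence generated by
   the vector-space axioms, bilinearity of both products, and the
   GDN-Poisson identities. *)
From mathcomp Require Import all_boot all_algebra.
Set Implicit Arguments. Unset Strict Implicit. Unset Printing Implicit Defensive.
Import GRing.Theory.
Local Open Scope ring_scope.

Inductive term (K X : Type) : Type :=
| tgen : X -> term K X
| te : term K X
| tzero : term K X
| tadd : term K X -> term K X -> term K X
| tscale : K -> term K X -> term K X
| tdot : term K X -> term K X -> term K X
| tcirc : term K X -> term K X -> term K X.

Arguments tgen {K X}. Arguments te {K X}. Arguments tzero {K X}.

Section Free.
Variables (K : fieldType) (X : Type).
Local Notation T := (term K X).

Definition tsub (x y : T) : T := tadd x (tscale (-1) y).

Inductive gdnp_eq : T -> T -> Prop :=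
| q_refl x : gdnp_eq x x
| q_sym x y : gdnp_eq x y -> gdnp_eq y x
| q_trans x y z : gdnp_eq x y -> gdnp_eq y z -> gdnp_eq x z
| q_add x x' y y' : gdnp_eq x x' -> gdnp_eq y y' -> gdnp_eq (tadd x y) (tadd x' y')
| q_scale a x x' : gdnp_eq x x' -> gdnp_eq (tscale a x) (tscale a x')
| q_dot x x' y y' : gdnp_eq x x' -> gdnp_eq y y' -> gdnp_eq (tdot x y) (tdot x' y')
| q_circ x x' y y' : gdnp_eq x x' -> gdnp_eq y y' -> gdnp_eq (tcirc x y) (tcirc x' y')
| v_addA x y z : gdnp_eq (tadd x (tadd y z)) (tadd (tadd x y) z)
| v_addC x y : gdnp_eq (tadd x y) (tadd y x)
| v_add0 x : gdnp_eq (tadd tzero x) x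
| v_addN x : gdnp_eq (tadd x (tscale (-1) x)) tzero
| v_scaleA a b x : gdnp_eq (tscale a (tscale b x)) (tscale (a * b) x)
| v_scale1 x : gdnp_eq (tscale 1 x) x
| v_scaleDr a x y : gdnp_eq (tscale a (tadd x y)) (tadd (tscale a x) (tscale a y))
| v_scaleDl a b x : gdnp_eq (tscale (a + b) x) (tadd (tscale a x) (tscale b x))
| b_dotDl x y z : gdnp_eq (tdot (tadd x y) z) (tadd (tdot x z) (tdot y z))
| b_dotDr x y z : gdnp_eq (tdot x (tadd y z)) (tadd (tdot x y) (tdot x z))
| b_dotZl a x y : gdnp_eq (tdot (tscale a x) y) (tscale a (tdot x y))
| b_dotZr a x y : gdnp_eq (tdot x (tscale a y)) (tscale a (tdot x y))
| b_circDl x y z : gdnp_eq (tcirc (tadd x y) z) (tadd (tcirc x z) (tcirc y z))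
| b_circDr x y z : gdnp_eq (tcirc x (tadd y z)) (tadd (tcirc x y) (tcirc x z))
| b_circZl a x y : gdnp_eq (tcirc (tscale a x) y) (tscale a (tcirc x y))
| b_circZr a x y : gdnp_eq (tcirc x (tscale a y)) (tscale a (tcirc x y))
| d_comm x y : gdnp_eq (tdot x y) (tdot y x)
| d_assoc x y z : gdnp_eq (tdot x (tdot y z)) (tdot (tdot x y) z)
| d_unit x : gdnp_eq (tdot te x) x
| g_lsym x y z : gdnp_eq (tsub (tcirc x (tcirc y z)) (tcirc (tcirc x y) z))
                         (tsub (tcirc y (tcirc x z)) (tcirc (tcirc y x) z))
| g_rcom x y z : gdnp_eq (tcirc (tcirc x y) z) (tcirc (tcirc x z) y)
| g_dotcirc x y z : gdnp_eq (tcirc (tdot x y) z) (tdot x (tcirc y z))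
| g_mixed x y z : gdnp_eq (tsub (tdot (tcirc x y) z) (tcirc x (tdot y z)))
                          (tsub (tdot (tcirc y x) z) (tcirc y (tdot x z))).

Definition mono (s : seq X) : T := foldr (fun a t => tdot (tgen a) t) te s.

Definition tsum (s : seq T) : T := foldr (@tadd K X) tzero s.

(* the word a with its i-th letter (0-based) omitted *)
Definition omit (i : nat) (a : seq X) : seq X := take i a ++ drop i.+1 a.

End Free.

From mathcomp Require Import all_boot all_algebra.
From mathcomp Require Import ring.
From Stdlib Require Import Setoid Morphisms.
Import GRing.Theory.
Local Open Scope ring_scope.

(* Since e is the unit of the dot product, (x.y)oz = x.(yoz) gives
   xoz = x.d(z) with d(z) := eoz, so the circ product is determined by d.
   The mixed identity with y = e makes d a derivation up to a correction
   term: d(x.z) = d(x).z + x.d(z) - x.z.d(e).  Iterating over a monomial,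
   d(a_1...a_n) = sum_i a_1..^a_i..a_n . d(a_i) - (n-1) a_1...a_n . d(e),
   and multiplying by u gives the formula. *)

#[local] Instance gdnp_equiv (K : fieldType) (X : Type) : Equivalence (@gdnp_eq K X).
Proof. split; [exact: q_refl | exact: q_sym | exact: q_trans]. Qed.

#[local] Instance tadd_proper (K : fieldType) (X : Type) :
  Proper (@gdnp_eq K X ==> @gdnp_eq K X ==> @gdnp_eq K X) (@tadd K X).
Proof. move=> ? ? ? ? ? ?; exact: q_add. Qed.

#[local] Instance tscale_proper (K : fieldType) (X : Type) :
  Proper (eq ==> @gdnp_eq K X ==> @gdnp_eq K X) (@tscale K X).
Proof. move=> ? ? -> ? ? ?; exact: q_scale. Qed.

#[local] Instance tdot_proper (K : fieldType) (X : Type) :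
  Proper (@gdnp_eq K X ==> @gdnp_eq K X ==> @gdnp_eq K X) (@tdot K X).
Proof. move=> ? ? ? ? ? ?; exact: q_dot. Qed.

#[local] Instance tcirc_proper (K : fieldType) (X : Type) :
  Proper (@gdnp_eq K X ==> @gdnp_eq K X ==> @gdnp_eq K X) (@tcirc K X).
Proof. move=> ? ? ? ? ? ?; exact: q_circ. Qed.

Section FreeGDNP.
Variables (K : fieldType) (X : Type).
Local Notation T := (term K X).
Local Notation "x =~ y" := (@gdnp_eq K X x y) (at level 70).
Local Notation "x +' y" := (tadd x y) (at level 50, left associativity).
Local Notation "a *' x" := (tscale a x) (at level 40).
Local Notation "x .* y" := (tdot x y) (at level 35).
Local Notation "x \oo y" := (tcirc x y) (at level 30).
Local Notation mono := (mono K).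

Implicit Types x y z : T.

Lemma tadd0r x : x +' tzero =~ x.
Proof. rewrite v_addC; exact: v_add0. Qed.

Lemma taddIr x y z : x +' z =~ y +' z -> x =~ y.
Proof.
move=> exz; rewrite -(tadd0r x) -(tadd0r y) -(v_addN z) !v_addA exz.
reflexivity.
Qed.

Lemma tscale0 x : 0 *' x =~ tzero.
Proof.
apply: (@taddIr _ _ (0 *' x)); rewrite v_add0 -v_scaleDl addr0; reflexivity.
Qed.

Lemma topp_opp x : (-1) *' ((-1) *' x) =~ x.
Proof. rewrite v_scaleA mulrNN mulr1 v_scale1; reflexivity. Qed.

Lemma tsub_solve {x y z w} :
  x +' (-1) *' y =~ z +' (-1) *' w -> w =~ z +' y +' (-1) *' x.
Proof.
move=> exy.
have -> : w =~ z +' (-1) *' (z +' (-1) *' w).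
  by rewrite v_scaleDr topp_opp v_addA v_addN v_add0; reflexivity.
rewrite -exy v_scaleDr topp_opp (v_addC (-1 *' x) y) v_addA; reflexivity.
Qed.

Lemma tdotr1 x : x .* te =~ x.
Proof. rewrite d_comm; exact: d_unit. Qed.

Lemma tdot0r x : x .* tzero =~ tzero.
Proof. rewrite -{1}(tscale0 tzero) b_dotZr tscale0; reflexivity. Qed.

Lemma eq_tsum (I : Type) (f g : I -> T) (s : seq I) :
  (forall i, f i =~ g i) -> tsum [seq f i | i <- s] =~ tsum [seq g i | i <- s].
Proof.
move=> efg; elim: s => [|i s IHs] /=; first reflexivity.
rewrite efg IHs; reflexivity.
Qed.

Lemma tdot_tsumr (I : Type) x (f : I -> T) (s : seq I) :
  x .* tsum [seq f i | i <- s] =~ tsum [seq x .* f i | i <- s].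
Proof.
elim: s => [|i s IHs] /=; first exact: tdot0r.
rewrite b_dotDr IHs; reflexivity.
Qed.

Lemma mono_cat (u v : seq X) : mono (u ++ v) =~ mono u .* mono v.
Proof.
elim: u => [|y u IHu] /=; first by rewrite d_unit; reflexivity.
rewrite IHu d_assoc; reflexivity.
Qed.

Local Notation d w := (te \oo w).

Lemma circ_dot_d x z : x \oo z =~ x .* d z.
Proof. rewrite -{1}(tdotr1 x); exact: g_dotcirc. Qed.

Lemma d_dot x z : d (x .* z) =~ d x .* z +' x .* d z +' (-1) *' (x .* z .* d te).
Proof.
have mixed := g_mixed x te z.
rewrite /tsub (circ_dot_d x te) (d_unit z) (circ_dot_d x z) in mixed.
rewrite (tsub_solve mixed) -d_assoc (d_comm (d te) z) d_assoc; reflexivity.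
Qed.

Definition leibniz_sum (a : seq X) : T :=
  tsum [seq mono (omit p.1 a) .* d (tgen p.2) | p <- zip (iota 0 (size a)) a].

Lemma map_zip_iotaS (I : Type) (f : nat * X -> I) k n (s : seq X) :
  [seq f p | p <- zip (iota k.+1 n) s] =
  [seq f (p.1.+1, p.2) | p <- zip (iota k n) s].
Proof. by elim: s k n => [|y s IHs] k [|n] //=; rewrite IHs; case: (zip _ _). Qed.

Lemma leibniz_sum_cons (y : X) (a : seq X) :
  leibniz_sum (y :: a) =~ mono a .* d (tgen y) +' tgen y .* leibniz_sum a.
Proof.
rewrite /leibniz_sum /= map_zip_iotaS /omit /= drop0.
apply: q_add; first reflexivity.
rewrite tdot_tsumr; apply: eq_tsum => p /=; rewrite d_assoc; reflexivity.
Qed.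

Lemma d_mono (a : seq X) :
  d (mono a) =~ leibniz_sum a +' (1 - (size a)%:R) *' (mono a .* d te).
Proof.
elim: a => [|y a IHa].
  by rewrite /leibniz_sum /= subr0 v_scale1 v_add0 d_unit; reflexivity.
rewrite /= d_dot IHa leibniz_sum_cons b_dotDr b_dotZr (d_comm (d (tgen y))) d_assoc.
have -> : 1 - (size a).+1%:R = (1 - (size a)%:R) + -1 :> K by rewrite -natr1; ring.
rewrite (v_scaleDl (1 - (size a)%:R) (-1)) !v_addA; reflexivity.
Qed.

End FreeGDNP.

Theorem mainTheorem4 (K : fieldType) (X : Type) (u a : seq X)
    (hn : (0 < size a)%N) :
  gdnp_eq (tcirc (mono K u) (mono K a))
    (tadd
       (tsum [seq tcirc (mono K (u ++ omit p.1 a)) (tgen p.2)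
             | p <- zip (iota 0 (size a)) a])
       (tscale (- ((size a).-1)%:R) (tcirc (mono K (u ++ a)) te))).
Proof.
have -> : - ((size a).-1)%:R = 1 - (size a)%:R :> K.
  by case: (size a) hn => // n _; rewrite -natr1; ring.
rewrite circ_dot_d d_mono b_dotDr b_dotZr /leibniz_sum tdot_tsumr.
rewrite (circ_dot_d _ _ (mono K (u ++ a))) mono_cat -d_assoc.
apply: q_add; last reflexivity.
symmetry; apply: eq_tsum => p; rewrite circ_dot_d mono_cat -d_assoc; reflexivity.
Qed.
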